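(* Let $n,m,R$ be integers with $2\le n,m\le R$, let $V\in\mathbb{F}_q^{n\times R}$ and $W\in\mathbb{F}_q^{m\times R}$ be full-rank matrices and $C\le\mathbb{F}_q^R$ a linear code. Let $\mathcal{C}=\phi_{V,W}(C)$ be an $\mathbb{F}_q$-$[n\times m,k,d]$ code of tensor rank $R$, and suppose $\Delta^{\mathrm{trk}}(\mathcal{C})=0$. Then for every $c\in C$ of Hamming weight $d$: \begin{enumerate} \item $\dim(C_W*c)=\dim(C_V*c)=d$; \item $(C_W*c)\cap C_V^\perp=(C_V*c)\cap C_W^\perp=\{0\}$; \item $\dim\big(C_V\cap(C_W*c)^\perp\big)=n-d$; \item $\dim\big(C_W\cap(C_V*c)^\perp\big)=m-d$. \end{enumerate}
   Context: $\mathbb{F}_q$ is a finite field; $\phi_{V,W}(x)=V\,\mathrm{diag}(x)\,W^{\mathrm t}$ for $x\in\mathbb{F}_q^R$. $C_V,C_W$ are the codes spanned by the rows of $V,W$; $\perp$ is the dual w.r.t. the standard inner product; $v*w$ is the componentwise product and $C'*v=\{c*v:c\in C'\}$. An $\mathbb{F}_q$-$[n\times m,k,d]$ code is a $k$-dimensional subspace of $\mathbb{F}_q^{n\times m}$ with minimum rank $d$ of its nonzero elements. The tensor rank $\mathrm{trk}(\mathcal{C})$ is the minimum dimension of a subspace spanned by rank-one matrices containing $\mathcal{C}$, and $\Delta^{\mathrm{trk}}(\mathcal{C})=\mathrm{trk}(\mathcal{C})-(k+d-1)$. *)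

From HB Require Import structures.
From mathcomp Require Import all_boot all_order all_algebra all_field.
Set Implicit Arguments. Unset Strict Implicit. Unset Printing Implicit Defensive.
Import GRing.Theory.
Local Open Scope ring_scope.

(* Codes in F^R are represented (mathcomp mxalgebra style) by matrices whose
   row space is the code: a matrix A : 'M[F]_(k, R) represents the code
   spanned by its rows; x : 'rV_R is in it iff (x <= A)%MS; its dimension is
   \rank A. *)

Definition phiVW (F : fieldType) (n m R : nat)
  (V : 'M[F]_(n, R)) (W : 'M[F]_(m, R)) (x : 'rV[F]_R) : 'M[F]_(n, m) :=
  V *m diag_mx x *m W^T.

Definition hwt (F : fieldType) (R : nat) (c : 'rV[F]_R) : nat :=
  #|[set i : 'I_R | c 0 i != 0]|.

(* Dual code w.r.t. the standard inner product: {y | y . a = 0 for all rows a}.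
   Its row space is the kernel of A^T. *)
Definition dual_code (F : fieldType) (k R : nat) (A : 'M[F]_(k, R)) : 'M[F]_R :=
  kermx A^T.

(* C_A * c : generated by the componentwise products (row i of A) * c,
   hence its row space is { a * c : a in C_A }. *)
Definition cwprod (F : fieldType) (k R : nat) (A : 'M[F]_(k, R)) (c : 'rV[F]_R)
  : 'M[F]_(k, R) := \matrix_(i, j) (A i j * c 0 j).

Definition rk1_spanned (F : fieldType) (n m : nat) (S : {vspace 'M[F]_(n, m)}) :=
  exists s : seq 'M[F]_(n, m), all (fun X => \rank X == 1)%N s /\ S = <<s>>%VS.

Definition has_tensor_rank (F : fieldType) (n m : nat)
  (Cc : {vspace 'M[F]_(n, m)}) (t : nat) : Prop :=
  (exists S : {vspace 'M[F]_(n, m)},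
      [/\ rk1_spanned S, (Cc <= S)%VS & \dim S = t]) /\
  (forall S : {vspace 'M[F]_(n, m)}, rk1_spanned S -> (Cc <= S)%VS -> (t <= \dim S)%N).

Definition min_rank (F : fieldType) (n m : nat)
  (Cc : {vspace 'M[F]_(n, m)}) (d : nat) : Prop :=
  (exists2 X, X \in Cc & X != 0 /\ \rank X = d) /\
  (forall X, X \in Cc -> X != 0 -> (d <= \rank X)%N).

Definition is_rank_code (F : fieldType) (n m : nat)
  (Cc : {vspace 'M[F]_(n, m)}) (k d : nat) : Prop :=
  \dim Cc = k /\ min_rank Cc d.

From HB Require Import structures.
From mathcomp Require Import all_boot all_order all_algebra all_field.
Set Implicit Arguments. Unset Strict Implicit.
Import GRing.Theory.
Local Open Scope ring_scope.

(* Since trk(Cc) = R, the R rank-one matrices v_i w_i^T spanning the image of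
   phi_{V,W} are linearly independent, so phi_{V,W} is injective and a nonzero
   c gives a nonzero phi(c) in Cc, of rank at least d.  On the other hand
   phi(c) = (V D) W^T = V (W D)^T with D = diag(c) of rank at most wt(c) = d,
   and V D, W D are (generator matrices of) C_V * c and C_W * c.  Hence all of
   phi(c), V D and W D have rank exactly d, and the four claims are the
   rank-nullity identity rank(A f) + rank(A :&: ker f) = rank A applied to the
   two factorisations of phi(c). *)

Lemma hwt_eq0 (F : fieldType) (R : nat) (c : 'rV[F]_R) :
  (hwt c == 0)%N = (c == 0).
Proof.
rewrite /hwt cards_eq0; apply/eqP/eqP => [c0 | ->].
  by apply/rowP => i; move/setP/(_ i): c0; rewrite !inE mxE => /negbFE/eqP.
by apply/setP => i; rewrite !inE mxE eqxx.
Qed.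

Lemma mxrank_sum_le (F : fieldType) (I : finType) (m n : nat) (P : {pred I})
  (A : I -> 'M[F]_(m, n)) :
  (\rank (\sum_(i in P) A i)%R <= \sum_(i in P) \rank (A i))%N.
Proof.
apply: (big_ind2 (fun (B : 'M[F]_(m, n)) r => \rank B <= r)%N) => //.
  by rewrite mxrank0.
move=> B1 r1 B2 r2 le1 le2.
exact: leq_trans (mxrank_add _ _) (leq_add le1 le2).
Qed.

Lemma mxrank_diag_mx_le (F : fieldType) (R : nat) (c : 'rV[F]_R) :
  (\rank (diag_mx c) <= hwt c)%N.
Proof.
have -> : diag_mx c = \sum_(i in [set i | c 0 i != 0]) c 0 i *: delta_mx i i.
  rewrite diag_mx_sum_delta [RHS]big_mkcond /=; apply: eq_bigr => i _.
  by rewrite inE; case: eqP => // ->; rewrite scale0r.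
rewrite /hwt -sum1_card; apply: leq_trans (mxrank_sum_le _ _) _.
apply: leq_sum => i _.
by rewrite (leq_trans (mxrank_scale _ _)) // mxrank_delta.
Qed.

Lemma free_of_tensor_rank (F : fieldType) (n m : nat)
  (Cc : {vspace 'M[F]_(n, m)}) (t : seq 'M[F]_(n, m)) :
  {in t, forall X, \rank X <= 1}%N -> (Cc <= <<t>>)%VS ->
  has_tensor_rank Cc (size t) -> free t.
Proof.
move=> rank_t Cc_t [_ trk_min].
pose s := [seq X <- t | \rank X == 1%N].
have span_s : <<s>>%VS = <<t>>%VS.
  apply/eqP; rewrite eqEsubv sub_span ?andbT => [|X]; last first.
    by rewrite mem_filter => /andP[].
  apply/span_subvP => X tX; have := rank_t X tX.
  rewrite leq_eqVlt ltnS leqn0 mxrank_eq0 => /orP[rk1 | /eqP->].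
    by apply: memv_span; rewrite mem_filter rk1.
  exact: mem0v.
have rk1_s : rk1_spanned <<s>>%VS by exists s; split; first exact: filter_all.
rewrite /free eqn_leq dim_span -span_s.
by apply: trk_min; rewrite // span_s.
Qed.

Section TensorRankInjective.

Variables (F : fieldType) (n m R : nat) (V : 'M[F]_(n, R)) (W : 'M[F]_(m, R)).

Definition col_outer (i : 'I_R) : 'M[F]_(n, m) := col i V *m (col i W)^T.

Lemma mxrank_col_outer i : (\rank (col_outer i) <= 1)%N.
Proof. exact: leq_trans (mxrankM_maxr _ _) (rank_leq_row _). Qed.

Lemma phiVW_sum_col_outer x : phiVW V W x = \sum_i x 0 i *: col_outer i.
Proof.
apply/matrixP => a b; rewrite /phiVW mul_mx_diag !mxE summxE.
by apply: eq_bigr => i _; rewrite !mxE big_ord1 !mxE mulrCA mulrA.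
Qed.

Lemma phiVW_eq0_of_tensor_rank (Cc : {vspace 'M[F]_(n, m)}) x :
  (forall X, X \in Cc -> exists y, X = phiVW V W y) ->
  has_tensor_rank Cc R -> phiVW V W x = 0 -> x = 0.
Proof.
move=> Cc_phi trk_Cc phi_x0.
pose t := [tuple col_outer i | i < R].
have t_i (i : 'I_R) : t`_i = col_outer i by rewrite -tnth_nth tnth_mktuple.
have free_t : free t.
  apply: (free_of_tensor_rank (Cc := Cc)); last by rewrite size_tuple.
    by move=> _ /mapP[i _ ->]; apply: mxrank_col_outer.
  apply/subvP => _ /Cc_phi[y ->]; rewrite phiVW_sum_col_outer.
  apply: memv_suml => i _; apply/memvZ/memv_span.
  by rewrite -t_i mem_nth // size_tuple.
apply/rowP => i; rewrite mxE; move: i; apply: (freeP free_t (fun i => x 0 i)).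
by under eq_bigr do rewrite t_i; rewrite -phiVW_sum_col_outer.
Qed.

End TensorRankInjective.

Lemma cwprod_diag (F : fieldType) (k R : nat) (A : 'M[F]_(k, R)) c :
  cwprod A c = A *m diag_mx c.
Proof. by rewrite mul_mx_diag. Qed.

Lemma phiVW_cwprodl (F : fieldType) (n m R : nat) (V : 'M[F]_(n, R))
  (W : 'M[F]_(m, R)) x : phiVW V W x = cwprod V x *m W^T.
Proof. by rewrite cwprod_diag. Qed.

Lemma phiVW_cwprodr (F : fieldType) (n m R : nat) (V : 'M[F]_(n, R))
  (W : 'M[F]_(m, R)) x : phiVW V W x = V *m (cwprod W x)^T.
Proof. by rewrite cwprod_diag trmx_mul tr_diag_mx mulmxA. Qed.

Lemma trmx_phiVW (F : fieldType) (n m R : nat) (V : 'M[F]_(n, R))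
  (W : 'M[F]_(m, R)) x : (phiVW V W x)^T = phiVW W V x.
Proof. by rewrite /phiVW !trmx_mul trmxK tr_diag_mx mulmxA. Qed.

Lemma mxrank_phiVW_le_hwt (F : fieldType) (n m R : nat) (V : 'M[F]_(n, R))
  (W : 'M[F]_(m, R)) x : (\rank (phiVW V W x) <= hwt x)%N.
Proof.
apply: leq_trans (mxrankM_maxl _ _) _.
exact: leq_trans (mxrankM_maxr _ _) (mxrank_diag_mx_le _).
Qed.

Section MinimalWeightCodeword.

Variables (F : fieldType) (n m R d : nat) (V : 'M[F]_(n, R)) (W : 'M[F]_(m, R)).
Variable c : 'rV[F]_R.
Hypotheses (hwt_c : hwt c = d) (rank_phi_ge : (d <= \rank (phiVW V W c))%N).

Lemma mxrank_phiVW_eq : \rank (phiVW V W c) = d.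
Proof. by apply/eqP; rewrite eqn_leq rank_phi_ge -hwt_c mxrank_phiVW_le_hwt. Qed.

Lemma mxrank_cwprod_eq : \rank (cwprod V c) = d.
Proof.
apply/eqP; rewrite eqn_leq -{2}mxrank_phiVW_eq phiVW_cwprodl mxrankM_maxl andbT.
by rewrite cwprod_diag -hwt_c (leq_trans (mxrankM_maxr _ _)) ?mxrank_diag_mx_le.
Qed.

Lemma cwprod_cap_dual_eq0 : (cwprod V c :&: dual_code W == (0 : 'M[F]_R))%MS.
Proof.
rewrite /dual_code sub0mx andbT submx0.
by apply/mxrank_injP; rewrite mxrank_cwprod_eq -phiVW_cwprodl mxrank_phiVW_eq.
Qed.

Lemma mxrank_cap_dual_cwprod :
  \rank (W :&: dual_code (cwprod V c))%MS = (\rank W - d)%N.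
Proof.
have := mxrank_mul_ker W (cwprod V c)^T.
by rewrite -phiVW_cwprodr -trmx_phiVW mxrank_tr mxrank_phiVW_eq => <-; rewrite addKn.
Qed.

End MinimalWeightCodeword.

Theorem proposition3p11 (F : finFieldType) (n m R : nat)
  (hn : (2 <= n)%N) (hm : (2 <= m)%N) (hnR : (n <= R)%N) (hmR : (m <= R)%N)
  (V : 'M[F]_(n, R)) (W : 'M[F]_(m, R))
  (hV : \rank V = n) (hW : \rank W = m)
  (C : 'M[F]_R) (Cc : {vspace 'M[F]_(n, m)}) (k d : nat)
  (hCc : forall X : 'M[F]_(n, m),
      X \in Cc <-> exists2 x : 'rV[F]_R, (x <= C)%MS & X = phiVW V W x)
  (hcode : is_rank_code Cc k d)
  (htrk : has_tensor_rank Cc R)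
  (hdelta : (R%:Z - (k%:Z + d%:Z - 1) = 0)%R) :
  forall c : 'rV[F]_R, (c <= C)%MS -> hwt c = d ->
    [/\ \rank (cwprod W c) = d /\ \rank (cwprod V c) = d,
        ((cwprod W c :&: dual_code V)%MS == (0 : 'M[F]_R))%MS /\
        ((cwprod V c :&: dual_code W)%MS == (0 : 'M[F]_R))%MS,
        \rank (V :&: dual_code (cwprod W c))%MS = (n - d)%N &
        \rank (W :&: dual_code (cwprod V c))%MS = (m - d)%N].
Proof.
move=> c cC hwt_c; have [_ [[X _ [X0 rkX]] min_rk]] := hcode.
have c0 : c != 0 by rewrite -hwt_eq0 hwt_c -rkX mxrank_eq0.
have phi_c0 : phiVW V W c != 0.
  apply: contraNneq c0 => /(phiVW_eq0_of_tensor_rank (Cc := Cc)) -> //.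
  by move=> Y /hCc[y _ ->]; exists y.
have rank_VW : (d <= \rank (phiVW V W c))%N.
  by apply: min_rk phi_c0; apply/hCc; exists c.
have rank_WV : (d <= \rank (phiVW W V c))%N by rewrite -trmx_phiVW mxrank_tr.
split.
- exact: conj (mxrank_cwprod_eq hwt_c rank_WV) (mxrank_cwprod_eq hwt_c rank_VW).
- exact: conj (cwprod_cap_dual_eq0 hwt_c rank_WV) (cwprod_cap_dual_eq0 hwt_c rank_VW).
- by rewrite -[in RHS]hV; apply: mxrank_cap_dual_cwprod hwt_c rank_WV.
- by rewrite -[in RHS]hW; apply: mxrank_cap_dual_cwprod hwt_c rank_VW.
Qed.
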